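(* Let $\mathbf{N}_1,\dots,\mathbf{N}_L$ be nonsingular $D\times D$ integer matrices that are pairwise commutative and coprime, i.e. $\mathbf{N}_i\mathbf{N}_j=\mathbf{N}_j\mathbf{N}_i$ and $\mathbf{N}_i,\mathbf{N}_j$ are coprime for all $i\ne j$. Then for any subset $\{i_1,\dots,i_p\}\subset\{1,\dots,L\}$ and any subset $\{j_1,\dots,j_q\}\subset\{1,\dots,L\}\setminus\{i_1,\dots,i_p\}$, the matrices $\mathbf{N}_{i_1}\cdots\mathbf{N}_{i_p}$ and $\mathbf{N}_{j_1}\cdots\mathbf{N}_{j_q}$ are commutative and coprime. Moreover, for any subset $\{i_1,\dots,i_p\}$ with $p\ge 2$, $\mathbf{N}_{i_1}\cdots\mathbf{N}_{i_p}$ is an lcm (i.e. simultaneously an lcrm and an lclm) of $\mathbf{N}_{i_1},\dots,\mathbf{N}_{i_p}$.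
   Context: All matrices are $D\times D$ integer matrices. Two integer matrices are left (resp. right) coprime if every common left (resp. right) divisor is unimodular (integer with determinant $\pm1$); $\mathbf{A}$ is a left divisor of $\mathbf{M}$ if $\mathbf{A}^{-1}\mathbf{M}$ is an integer matrix, a right divisor if $\mathbf{M}\mathbf{A}^{-1}$ is. For commuting nonsingular integer matrices, left and right coprimeness are equivalent and are simply called ''coprime''. Crm/lcrm: a nonsingular integer $\mathbf{C}$ with $\mathbf{C}=\mathbf{M}_i\mathbf{P}_i$ ($\mathbf{P}_i$ integer) for all $i$ is a crm; an lcrm is a crm $\mathbf{R}$ such that every crm equals $\mathbf{R}\mathbf{A}$ for an integer $\mathbf{A}$; clm/lclm are defined symmetrically with left multiplication. An ''lcm'' means a matrix that is both an lcrm and an lclm. *)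

From HB Require Import structures.
From mathcomp Require Import all_boot all_order all_algebra.
Set Implicit Arguments. Unset Strict Implicit. Unset Printing Implicit Defensive.
Import Order.TTheory GRing.Theory Num.Theory.
Local Open Scope ring_scope.

Notation imx D := 'M[int]_D.

Definition nonsingular (D : nat) (A : imx D) : Prop := \det A != 0.

Definition unimodular (D : nat) (U : imx D) : Prop := \det U = 1 \/ \det U = -1.

(* A is a left divisor of M: A nonsingular and A^{-1} M is an integer matrix *)
Definition left_divisor (D : nat) (A M : imx D) : Prop :=
  nonsingular A /\ exists X : imx D, M = A *m X.

(* A is a right divisor of M: A nonsingular and M A^{-1} is an integer matrix *)
Definition right_divisor (D : nat) (A M : imx D) : Prop :=
  nonsingular A /\ exists X : imx D, M = X *m A.

Definition left_coprime (D : nat) (M1 M2 : imx D) : Prop :=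
  forall A : imx D, left_divisor A M1 -> left_divisor A M2 -> unimodular A.

Definition right_coprime (D : nat) (M1 M2 : imx D) : Prop :=
  forall A : imx D, right_divisor A M1 -> right_divisor A M2 -> unimodular A.

(* "coprime" (used for commuting matrices, where left and right coprimeness
   are equivalent): both left and right coprime *)
Definition mx_coprime (D : nat) (M1 M2 : imx D) : Prop :=
  left_coprime M1 M2 /\ right_coprime M1 M2.

Definition mx_commute (D : nat) (A B : imx D) : Prop := A *m B = B *m A.

(* ordered product N_{i_1} ... N_{i_p} over the elements of I (increasing order) *)
Definition mxprod (D L : nat) (N : 'I_L -> imx D) (I : {set 'I_L}) : imx D :=
  foldr (fun i P => N i *m P) 1%:M (enum I).

Definition crm (D L : nat) (N : 'I_L -> imx D) (I : {set 'I_L}) (C : imx D) : Prop :=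
  nonsingular C /\ forall i, i \in I -> exists P : imx D, C = N i *m P.

Definition lcrm (D L : nat) (N : 'I_L -> imx D) (I : {set 'I_L}) (R : imx D) : Prop :=
  crm N I R /\ forall C : imx D, crm N I C -> exists A : imx D, C = R *m A.

Definition clm (D L : nat) (N : 'I_L -> imx D) (I : {set 'I_L}) (C : imx D) : Prop :=
  nonsingular C /\ forall i, i \in I -> exists P : imx D, C = P *m N i.

Definition lclm (D L : nat) (N : 'I_L -> imx D) (I : {set 'I_L}) (R : imx D) : Prop :=
  clm N I R /\ forall C : imx D, clm N I C -> exists A : imx D, C = A *m R.

Definition is_lcm (D L : nat) (N : 'I_L -> imx D) (I : {set 'I_L}) (R : imx D) : Prop :=
  lcrm N I R /\ lclm N I R.

From HB Require Import structures.
From mathcomp Require Import all_boot all_order all_algebra.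
Import GRing.Theory Num.Theory.
Local Open Scope ring_scope.

(* Two nonsingular integer matrices are left (right) coprime iff they satisfy a
   left (right) Bezout identity; the nontrivial direction comes from the Smith
   normal form of [A B]. Bezout identities are stable under products of
   commuting factors, which gives the coprimality of disjoint products. For the
   lcm, if C = A P = B Q with A, B commuting and U A + V B = 1, then over the
   rationals P = B z and Q = A z for z = (A B)^-1 C, so C = A B (U Q + V P) is
   an integer right multiple of A B. *)

Lemma mul_int_eq1 (z w : int) : z * w = 1 -> z = 1 \/ z = -1.
Proof.
rewrite mulrC => /intUnitRing.unitzPl.
by rewrite qualifE => /orP[] /eqP ->; [left | right].
Qed.

Local Notation ratmx := (map_mx (intr : int -> rat)).

Lemma map_mx_intr_inj (m n : nat) : injective (ratmx : 'M_(m, n) -> _).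
Proof.
move=> M1 M2 /matrixP eqM; apply/matrixP => i j.
by apply: (@intr_inj rat); have := eqM i j; rewrite !mxE.
Qed.

Section BezoutMatrices.
Context {D : nat}.
Implicit Types A B C G P Q U V X Y : 'M[int]_D.

Definition left_bezout A B := exists X Y, A *m X + B *m Y = 1%:M.
Definition right_bezout A B := exists X Y, X *m A + Y *m B = 1%:M.
Definition mx_bezout A B := left_bezout A B /\ right_bezout A B.

Lemma left_bezout_sym {A B} : left_bezout A B -> left_bezout B A.
Proof. by case=> X [Y h]; exists Y, X; rewrite addrC. Qed.

Lemma right_bezout_sym {A B} : right_bezout A B -> right_bezout B A.
Proof. by case=> X [Y h]; exists Y, X; rewrite addrC. Qed.

Lemma mx_bezout_sym {A B} : mx_bezout A B -> mx_bezout B A.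
Proof. by case=> /left_bezout_sym hl /right_bezout_sym hr. Qed.

Lemma right_bezout_tr A B : right_bezout A B <-> left_bezout A^T B^T.
Proof.
split=> -[X [Y h]]; exists X^T, Y^T.
  by rewrite -!trmx_mul -raddfD /= h trmx1.
by apply: trmx_inj; rewrite raddfD /= !trmx_mul !trmxK h trmx1.
Qed.

Lemma right_coprime_tr A B : right_coprime A B -> left_coprime A^T B^T.
Proof.
move=> hcop G [hG [X1 e1]] [_ [X2 e2]].
have nsGT : nonsingular G^T by rewrite /nonsingular det_tr.
have := hcop G^T; rewrite /unimodular det_tr; apply.
  by split=> //; exists X1^T; rewrite -trmx_mul -e1 trmxK.
by split=> //; exists X2^T; rewrite -trmx_mul -e2 trmxK.
Qed.

Lemma left_bezout_coprime A B : left_bezout A B -> left_coprime A B.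
Proof.
case=> X [Y h] G [_ [X1 eA]] [_ [X2 eB]]; rewrite eA eB in h.
apply: (@mul_int_eq1 _ (\det (X1 *m X + X2 *m Y))).
by rewrite -det_mulmx mulmxDr !mulmxA h det1.
Qed.

Lemma right_bezout_coprime A B : right_bezout A B -> right_coprime A B.
Proof.
case=> X [Y h] G [_ [X1 eA]] [_ [X2 eB]]; rewrite eA eB in h.
apply: (@mul_int_eq1 _ (\det (X *m X1 + Y *m X2))).
by rewrite mulrC -det_mulmx mulmxDl -!mulmxA h det1.
Qed.

(* In the Smith form L S R of [A B], S vanishes outside its first D columns;
   G is L times that block. *)
Lemma row_mx_left_factor A B :
  exists G (K : 'M[int]_(D, D + D)) (W : 'M[int]_(D + D, D)),
    row_mx A B = G *m K /\ row_mx A B *m W = G.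
Proof.
have [L _ [R uR [d _ eM]]] := int_Smith_normal_form (row_mx A B).
set S := (\matrix_(i, j) _) in eM.
have eS : S = row_mx (lsubmx S) 0.
  rewrite -[S in LHS]hsubmxK; congr row_mx; apply/matrixP => i j.
  rewrite !mxE /=; case: eqP => [eij|]; last by rewrite mulr0n.
  by have := ltn_ord i; rewrite eij ltnNge leq_addr.
exists (L *m lsubmx S), (usubmx R), (lsubmx (invmx R)); split.
  by rewrite eM {1}eS mul_mx_row mulmx0 -[R in LHS]vsubmxK mul_row_col mul0mx addr0.
by rewrite mulmx_lsub eM -mulmxA mulmxV // mulmx1 {1}eS mul_mx_row mulmx0 row_mxKl.
Qed.

Lemma left_coprime_bezout A B :
  nonsingular A -> left_coprime A B -> left_bezout A B.
Proof.
move=> nsA hcop; have [G [K [W [eGK eWG]]]] := row_mx_left_factor A B.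
have eA : A = G *m lsubmx K by rewrite mulmx_lsub -eGK row_mxKl.
have eB : B = G *m rsubmx K by rewrite mulmx_rsub -eGK row_mxKr.
have nsG : nonsingular G.
  by move: nsA; rewrite /nonsingular eA det_mulmx mulf_eq0 negb_or => /andP[].
have uG : G \in unitmx.
  rewrite unitmxE.
  by case: (hcop G (conj nsG (ex_intro _ _ eA)) (conj nsG (ex_intro _ _ eB)))
    => ->; [exact: unitr1 | exact: unitrN1].
exists (usubmx W *m invmx G), (dsubmx W *m invmx G).
by rewrite !mulmxA -mulmxDl -mul_row_col vsubmxK eWG mulmxV.
Qed.

Lemma right_coprime_bezout A B :
  nonsingular A -> right_coprime A B -> right_bezout A B.
Proof.
move=> nsA /right_coprime_tr hcop; apply/right_bezout_tr.
by apply: left_coprime_bezout; rewrite // /nonsingular det_tr.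
Qed.

Lemma mx_coprime_bezout A B : nonsingular A -> mx_coprime A B <-> mx_bezout A B.
Proof.
move=> nsA; split=> -[hl hr]; split.
- exact: left_coprime_bezout.
- exact: right_coprime_bezout.
- exact: left_bezout_coprime.
- exact: right_bezout_coprime.
Qed.

Lemma left_bezoutMl A B C : left_bezout A C -> left_bezout B C ->
  A *m C = C *m A -> left_bezout (A *m B) C.
Proof.
case=> X [Y hA] [X' [Y' hB]] cAC.
exists (X' *m X), (A *m Y' *m X + Y).
have -> : A *m B *m (X' *m X) + C *m (A *m Y' *m X + Y)
    = A *m (B *m X' + C *m Y') *m X + C *m Y.
  by rewrite !mulmxDr !mulmxDl !mulmxA cAC addrA.
by rewrite hB mulmx1.
Qed.

Lemma right_bezoutMl A B C : right_bezout A C -> right_bezout B C ->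
  B *m C = C *m B -> right_bezout (A *m B) C.
Proof.
move=> /right_bezout_tr hA /right_bezout_tr hB cBC.
apply/right_bezout_tr; rewrite trmx_mul.
by apply: left_bezoutMl; rewrite // -!trmx_mul cBC.
Qed.

Lemma mx_bezoutMl A B C : mx_bezout A C -> mx_bezout B C ->
  A *m C = C *m A -> B *m C = C *m B -> mx_bezout (A *m B) C.
Proof.
case=> hlA hrA [hlB hrB] cAC cBC.
by split; [exact: left_bezoutMl | exact: right_bezoutMl].
Qed.

Lemma right_bezout_common_multiple A B P Q U V :
  nonsingular B -> A *m B = B *m A -> U *m A + V *m B = 1%:M ->
  A *m P = B *m Q -> A *m P = A *m B *m (U *m Q + V *m P).
Proof.
move=> nsB cAB hUV ePQ; apply: map_mx_intr_inj.
move: cAB hUV ePQ => /(congr1 ratmx) + /(congr1 ratmx) + /(congr1 ratmx).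
rewrite !(map_mxM, map_mxD, map_mx1).
have : ratmx B \in unitmx.
  by rewrite unitmxE unitfE det_map_mx intr_eq0.
move: (map_mx _ A) (map_mx _ B) (map_mx _ P) (map_mx _ Q) (map_mx _ U)
  (map_mx _ V) => a b p q u v ub cab huv epq.
have [z <- <-] : exists2 z, b *m z = p & a *m z = q.
  exists (invmx b *m p) => [|]; first by rewrite mulKVmx.
  by apply: (can_inj (mulKmx ub)); rewrite mulmxA -cab -mulmxA mulKVmx.
have -> : u *m (a *m z) + v *m (b *m z) = z by rewrite !mulmxA -mulmxDl huv mul1mx.
by rewrite mulmxA.
Qed.

Lemma left_bezout_common_multiple A B P Q X Y :
  nonsingular B -> A *m B = B *m A -> A *m X + B *m Y = 1%:M ->
  P *m A = Q *m B -> P *m A = (Q *m X + P *m Y) *m (A *m B).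
Proof.
move=> nsB cAB hXY ePQ.
have nsBT : nonsingular B^T by rewrite /nonsingular det_tr.
have cABT : A^T *m B^T = B^T *m A^T by rewrite -!trmx_mul cAB.
have hXYT : X^T *m A^T + Y^T *m B^T = 1%:M.
  by rewrite -!trmx_mul -raddfD /= hXY trmx1.
have ePQT : A^T *m P^T = B^T *m Q^T by rewrite -!trmx_mul ePQ.
apply: trmx_inj.
rewrite trmx_mul (right_bezout_common_multiple _ _ _ _ _ _ nsBT cABT hXYT ePQT).
by rewrite cABT !trmx_mul; congr (_ *m _); rewrite raddfD /= !trmx_mul.
Qed.

End BezoutMatrices.

Definition mxprod_seq {D L : nat} (N : 'I_L -> 'M[int]_D) (s : seq 'I_L) :=
  foldr (fun i P => N i *m P) 1%:M s.

Section CoprimeFamily.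
Context {D L : nat} {N : 'I_L -> 'M[int]_D}.
Hypothesis nsN : forall i, nonsingular (N i).
Hypothesis commN : forall i j, i != j -> mx_commute (N i) (N j).
Hypothesis copN : forall i j, i != j -> mx_coprime (N i) (N j).
Local Notation prod := (mxprod_seq N).

Lemma mxprod_seq_comm M s :
  {in s, forall x, M *m N x = N x *m M} -> M *m prod s = prod s *m M.
Proof.
elim: s => [|y s IH] cMs /=; first by rewrite mulmx1 mul1mx.
rewrite mulmxA cMs ?mem_head // -!mulmxA IH // => x sx.
by apply: cMs; rewrite in_cons sx orbT.
Qed.

Lemma mxprod_seq_comm_N {j s} : j \notin s -> N j *m prod s = prod s *m N j.
Proof.
move=> js; apply: mxprod_seq_comm => x sx; apply: commN.
by apply: contraNneq js => ->.
Qed.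

Lemma mxprod_seq_disjoint_comm s t :
  {in t, forall x, x \notin s} -> prod s *m prod t = prod t *m prod s.
Proof.
by move=> dst; apply: mxprod_seq_comm => x tx; apply/esym/mxprod_seq_comm_N/dst.
Qed.

Lemma mxprod_seq_rem {x s} : x \in s -> prod s = N x *m prod (rem x s).
Proof.
elim: s => [|y s IH] //=; rewrite in_cons.
have [-> // | neq_xy] /= := eqVneq x y.
by move=> sx; rewrite IH // !mulmxA; congr (_ *m _); apply/esym/commN.
Qed.

Lemma mxprod_seq_rem_r x s : uniq s -> x \in s -> prod s = prod (rem x s) *m N x.
Proof.
move=> us sx; rewrite (mxprod_seq_rem sx) mxprod_seq_comm_N //.
by rewrite (mem_rem_uniq _ us) inE eqxx.
Qed.

Lemma nonsingular_mxprod_seq s : nonsingular (prod s).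
Proof.
rewrite /nonsingular; elim: s => [|y s IH] /=; first by rewrite det1 oner_neq0.
by rewrite det_mulmx mulf_neq0 //; apply: nsN.
Qed.

Lemma mx_bezout_mxprod_seq_N {s j} : j \notin s -> mx_bezout (prod s) (N j).
Proof.
elim: s => [|y s IH] /=.
  by split; exists 1%:M, 0; rewrite ?(mulmx1, mul1mx, mulmx0, mul0mx, addr0).
rewrite in_cons negb_or => /andP[neq_jy js]; have neq_yj := neq_jy.
rewrite eq_sym in neq_yj.
apply: mx_bezoutMl; [ | exact: IH | exact: commN | ].
  by apply/mx_coprime_bezout; [exact: nsN | exact: copN].
by apply/esym/mxprod_seq_comm_N.
Qed.

Lemma mx_bezout_mxprod_seq s t :
  {in t, forall x, x \notin s} -> mx_bezout (prod s) (prod t).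
Proof.
elim: t => [|y t IH] /= dst.
  by split; exists 0, 1%:M; rewrite ?(mulmx1, mul1mx, mulmx0, mul0mx, add0r).
have sy : y \notin s by apply: dst; apply: mem_head.
apply/mx_bezout_sym/mx_bezoutMl.
- exact/mx_bezout_sym/mx_bezout_mxprod_seq_N.
- by apply/mx_bezout_sym/IH => x tx; apply: dst; rewrite in_cons tx orbT.
- exact: mxprod_seq_comm_N.
- by apply/esym/mxprod_seq_disjoint_comm => x tx; apply: dst; rewrite in_cons tx orbT.
Qed.

Lemma mxprod_seq_lcrm s (C : 'M[int]_D) : uniq s ->
  {in s, forall i, exists Q, C = N i *m Q} -> exists A, C = prod s *m A.
Proof.
elim: s C => [|y s IH] C /=; first by exists C; rewrite mul1mx.
case/andP=> ys us dvdC.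
have [P eP] : exists P, C = prod s *m P.
  by apply: IH => // i si; apply: dvdC; rewrite in_cons si orbT.
have [Q eQ] := dvdC y (mem_head _ _).
have [_ [U [V hUV]]] := mx_bezout_sym (mx_bezout_mxprod_seq_N ys).
have := right_bezout_common_multiple _ _ _ _ _ _ (nonsingular_mxprod_seq s)
  (mxprod_seq_comm_N ys) hUV (etrans (esym eQ) eP).
by rewrite -eQ => ->; eexists.
Qed.

Lemma mxprod_seq_lclm s (C : 'M[int]_D) : uniq s ->
  {in s, forall i, exists Q, C = Q *m N i} -> exists A, C = A *m prod s.
Proof.
elim: s C => [|y s IH] C /=; first by exists C; rewrite mulmx1.
case/andP=> ys us dvdC.
have [P eP] : exists P, C = P *m prod s.
  by apply: IH => // i si; apply: dvdC; rewrite in_cons si orbT.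
have [Q eQ] := dvdC y (mem_head _ _).
have [[X [Y hXY]] _] := mx_bezout_sym (mx_bezout_mxprod_seq_N ys).
have := left_bezout_common_multiple _ _ _ _ _ _ (nonsingular_mxprod_seq s)
  (mxprod_seq_comm_N ys) hXY (etrans (esym eQ) eP).
by rewrite -eQ => ->; eexists.
Qed.

End CoprimeFamily.

Theorem lemma2 (D L : nat) (N : 'I_L -> 'M[int]_D)
  (hns : forall i, nonsingular (N i))
  (hcomm : forall i j, i != j -> mx_commute (N i) (N j))
  (hcop : forall i j, i != j -> mx_coprime (N i) (N j)) :
  (forall I J : {set 'I_L}, [disjoint I & J] ->
     mx_commute (mxprod N I) (mxprod N J) /\ mx_coprime (mxprod N I) (mxprod N J))
  /\
  (forall I : {set 'I_L}, (2 <= #|I|)%N -> is_lcm N I (mxprod N I)).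
Proof.
have nsP := nonsingular_mxprod_seq hns.
split=> [I J dIJ | I _].
  have dJI : {in enum J, forall x, x \notin enum I}.
    by move=> x; rewrite !mem_enum => Jx; rewrite (disjointFl dIJ Jx).
  split; first exact: mxprod_seq_disjoint_comm.
  by apply/mx_coprime_bezout; [exact: nsP | exact: mx_bezout_mxprod_seq].
have uI := enum_uniq (pred_of_set I).
split; split.
- split=> [|i Ii]; first exact: nsP.
  by eexists; apply: (mxprod_seq_rem hcomm); rewrite mem_enum.
- by move=> C [_ dvdC]; apply: mxprod_seq_lcrm => // i; rewrite mem_enum => /dvdC.
- split=> [|i Ii]; first exact: nsP.
  by eexists; apply: (mxprod_seq_rem_r hcomm); rewrite ?mem_enum.
- by move=> C [_ dvdC]; apply: mxprod_seq_lclm => // i; rewrite mem_enum => /dvdC.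
Qed.
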